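(* Let $\mathcal{A}$ be a central and essential arrangement in $\mathbb{Q}^l$ as in the context, let $1\le i_1<\dots<i_l\le n$, let $\sigma$ be a term ordering, and let $p$ be a prime that is good for $\mathcal{A}$ and $\sigma$-lucky for the ideal $I_{\mathbb{Z}}=\langle\alpha_{i_1},\dots,\alpha_{i_l}\rangle\subseteq\mathbb{Z}[x_1,\dots,x_l]$. Then $(i_1,\dots,i_l)\in\mathfrak{I}(\mathcal{A})$ if and only if $(i_1,\dots,i_l)\in\mathfrak{I}(\mathcal{A}_p)$.
   Context: $\mathcal{A}=\{H_1,\dots,H_n\}$ is an arrangement of $n$ distinct, linearly ordered linear hyperplanes in $\mathbb{Q}^l$ with $\bigcap_iH_i=\{0\}$. $H_i=\{\alpha_i=0\}$ with $\alpha_i\in\mathbb{Z}[x_1,\dots,x_l]$ a nonzero linear form whose coefficients are not all divisible by any prime; $Q(\mathcal{A})=\prod\alpha_i$. $\pi_p$ denotes reduction mod $p$, $(\alpha_i)_p=\pi_p(\alpha_i)$; $p$ is good if $\pi_p(Q(\mathcal{A}))$ is reduced (no $(\alpha_i)_p$ is a scalar multiple of $(\alpha_j)_p$, $i<j$), and then $\mathcal{A}_p=\{(H_1)_p,\dots,(H_n)_p\}$ in $\mathbb{F}_p^l$, $(H_i)_p=\{(\alpha_i)_p=0\}$. For an arrangement $\{G_1,\dots,G_n\}$ in $K^l$, $\mathfrak{I}=\{(i_1,\dots,i_l): i_1<\dots<i_l,\ \dim(G_{i_1}\cap\dots\cap G_{i_l})=0\}$. Gröbner notions: for a term ordering $\sigma$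 and nonzero $f\in\mathbb{Z}[x_1,\dots,x_l]$, $\mathrm{LT}_\sigma(f)$ is the $\sigma$-largest term in the support of $f$, $\mathrm{LC}_\sigma(f)$ its coefficient, $\mathrm{LM}_\sigma(f)=\mathrm{LC}_\sigma(f)\mathrm{LT}_\sigma(f)$. A finite set $G$ of nonzero elements of an ideal $I\subseteq\mathbb{Z}[x_1,\dots,x_l]$ is a minimal strong $\sigma$-Gröbner basis of $I$ if $G$ generates $I$, for every nonzero $f\in I$ some $\mathrm{LM}_\sigma(g)$, $g\in G$, divides $\mathrm{LM}_\sigma(f)$, and no $\mathrm{LM}_\sigma(g)$ divides $\mathrm{LM}_\sigma(g')$ for distinct $g,g'\in G$. Such bases exist for nonzero $I$ and the set of their leading coefficients does not depend on the choice. A prime $p$ is $\sigma$-lucky for $I$ if $p$ divides no leading coefficient of an element of a minimal strong $\sigma$-Gröbner basis of $I$. *)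

From HB Require Import structures.
From mathcomp Require Import all_boot all_order all_algebra.
From mathcomp Require Import mpoly.
Set Implicit Arguments. Unset Strict Implicit. Unset Printing Implicit Defensive.
Import Order.TTheory GRing.Theory Num.Theory.
Local Open Scope ring_scope.

(* An arrangement {G_1,...,G_n} of linear hyperplanes in K^l is given by the
   n x l matrix B whose i-th row is the coefficient vector of the linear form
   defining G_i. *)

Definition hyp (K : fieldType) (l : nat) (a : 'rV[K]_l) : 'M[K]_l :=
  kermx a^T.

Definition in_frakI (K : fieldType) (n l : nat) (B : 'M[K]_(n, l))
    (idx : 'I_l -> 'I_n) : Prop :=
  (forall a b : 'I_l, (a < b)%N -> (idx a < idx b)%N) /\
  \rank (\bigcap_(k < l) hyp (row (idx k) B))%MS = 0%N.

Definition matQ (n l : nat) (A : 'M[int]_(n, l)) : 'M[rat]_(n, l) :=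
  map_mx (fun z : int => z%:~R) A.
Definition matp (p : nat) (n l : nat) (A : 'M[int]_(n, l)) : 'M['F_p]_(n, l) :=
  map_mx (fun z : int => z%:~R) A.

Definition central_essential_arrangement (n l : nat) (A : 'M[int]_(n, l)) :=
  [/\
      forall i : 'I_n, row i A != 0,
      forall (i : 'I_n) (q : nat), prime q ->
        ~ (forall j : 'I_l, (q%:Z %| A i j)%Z),
      forall i j : 'I_n, i != j ->
        ~~ (hyp (row i (matQ A)) == hyp (row j (matQ A)))%MS &
      \rank (\bigcap_(i < n) hyp (row i (matQ A)))%MS = 0%N].

Definition good_prime (n l : nat) (A : 'M[int]_(n, l)) (p : nat) : Prop :=
  prime p /\
  forall i j : 'I_n, (i < j)%N ->
    forall c : 'F_p, row i (matp p A) != c *: row j (matp p A).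

Definition linform (n l : nat) (A : 'M[int]_(n, l)) (i : 'I_n) : {mpoly int[l]} :=
  \sum_(j < l) A i j *: 'X_j.

Definition term_order (l : nat) (sigma : rel 'X_{1..l}) : Prop :=
  [/\ reflexive sigma, transitive sigma, antisymmetric sigma & total sigma] /\
  (forall m1 m2 m : 'X_{1..l},
     sigma m1 m2 -> sigma (mnm_add m1 m) (mnm_add m2 m)) /\
  (forall m : 'X_{1..l}, sigma (@mnm0 l) m).

Definition LTs (l : nat) (sigma : rel 'X_{1..l}) (f : {mpoly int[l]}) : 'X_{1..l} :=
  foldr (fun m acc => if sigma m acc then acc else m)
        (head (@mnm0 l) (msupp f)) (msupp f).

Definition LCs (l : nat) (sigma : rel 'X_{1..l}) (f : {mpoly int[l]}) : int :=
  f@_(LTs sigma f).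

Definition LM_dvd (l : nat) (sigma : rel 'X_{1..l}) (g f : {mpoly int[l]}) : bool :=
  (LCs sigma g %| LCs sigma f)%Z && lem (LTs sigma g) (LTs sigma f).

Definition gen_ideal (l : nat) (s : seq {mpoly int[l]}) (f : {mpoly int[l]}) : Prop :=
  exists c : seq {mpoly int[l]},
    size c = size s /\ f = \sum_(k < size s) c`_k * s`_k.

Definition min_strong_GB (l : nat) (sigma : rel 'X_{1..l})
    (I : {mpoly int[l]} -> Prop) (G : seq {mpoly int[l]}) : Prop :=
  [/\ forall g, g \in G -> g != 0 /\ I g,
      forall f, gen_ideal G f <-> I f,
      forall f, I f -> f != 0 -> exists2 g, g \in G & LM_dvd sigma g f &
      forall g g', g \in G -> g' \in G -> g != g' -> ~~ LM_dvd sigma g g'].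

Definition sigma_lucky (l : nat) (sigma : rel 'X_{1..l})
    (I : {mpoly int[l]} -> Prop) (p : nat) : Prop :=
  exists G : seq {mpoly int[l]},
    min_strong_GB sigma I G /\
    forall g, g \in G -> ~~ (p%:Z %| LCs sigma g)%Z.

(* Over any field, (i_1, ..., i_l) lies in frakI exactly when the minor M whose
   rows are the coefficient vectors of the alpha_(i_k) is invertible, so one
   has to show that det M <> 0 forces p not to divide det M.
   The linear forms in I_Z are the u . x with u in the row lattice
   L = Z^l M, and every element of I_Z has zero constant term and linear part
   in L.  So if u in L has leading variable x_j, the basis element whose
   leading monomial divides u_j x_j has leading term x_j, and its linear part
   w in L has leading variable x_j, w_j | u_j and, p being lucky, p does not
   divide w_j.  Subtracting multiples of such w from p v in L removes its
   leading coordinates one by one, which shows that L is p-saturated.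
   Finally, a p-saturated lattice of full rank has determinant prime to p: an
   integer lift c of a nonzero kernel vector of M mod p satisfies c M in p L,
   which forces c in p Z^l because M is injective. *)

From mathcomp Require Import all_boot all_algebra.
From mathcomp Require Import mpoly.
Import GRing.Theory.
Local Open Scope ring_scope.
Set Implicit Arguments. Unset Strict Implicit. Unset Printing Implicit Defensive.

Lemma bigcap_kermx_row (K : fieldType) (m l : nat) (N : 'M[K]_(m, l)) :
  (\bigcap_(k < m) kermx (row k N)^T == kermx N^T)%MS.
Proof.
apply/andP; split; last first.
  apply/sub_bigcapmxP => k _; rewrite sub_kermx rowE trmx_mul mulmxA.
  by rewrite mulmx_ker mul0mx.
rewrite sub_kermx; apply/eqP/matrixP => i k.
have := @bigcapmx_inf _ _ k xpredT _ _ (fun k => kermx (row k N)^T) _ isT (submx_refl _).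
rewrite sub_kermx => /eqP/matrixP/(_ i 0); rewrite !mxE => h; rewrite -[RHS]h.
by apply: eq_bigr => t _; rewrite !mxE.
Qed.

Lemma rank_kermx_tr_eq0 (K : fieldType) (l : nat) (N : 'M[K]_l) :
  (\rank (kermx N^T) == 0%N) = (\det N != 0).
Proof.
rewrite mxrank_ker mxrank_tr subn_eq0 -unitfE -unitmxE -row_free_unit /row_free.
by rewrite eqn_leq rank_leq_row.
Qed.

Lemma in_frakI_det (K : fieldType) (n l : nat) (B : 'M[K]_(n, l)) (idx : 'I_l -> 'I_n) :
  in_frakI B idx <->
  (forall a b : 'I_l, (a < b)%N -> (idx a < idx b)%N) /\ \det (rowsub idx B) != 0.
Proof.
rewrite /in_frakI /hyp -rank_kermx_tr_eq0 -(eqmx_rank (bigcap_kermx_row _)).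
under eq_bigr => k _ do rewrite -row_rowsub.
by split=> -[mono /eqP rk]; split.
Qed.

Lemma det_rowsub_map_int (R : comNzRingType) (n l : nat) (A : 'M[int]_(n, l))
    (idx : 'I_l -> 'I_n) :
  \det (rowsub idx (map_mx (fun z : int => z%:~R : R) A)) = (\det (rowsub idx A))%:~R.
Proof. by rewrite -det_map_mx; congr (\det _); apply/matrixP => i j; rewrite !mxE. Qed.

Lemma in_frakI_matQ (n l : nat) (A : 'M[int]_(n, l)) (idx : 'I_l -> 'I_n) :
  in_frakI (matQ A) idx <->
  (forall a b : 'I_l, (a < b)%N -> (idx a < idx b)%N) /\ \det (rowsub idx A) != 0.
Proof. by rewrite in_frakI_det det_rowsub_map_int intr_eq0. Qed.

Lemma in_frakI_matp (p n l : nat) (A : 'M[int]_(n, l)) (idx : 'I_l -> 'I_n) :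
  prime p ->
  in_frakI (matp p A) idx <->
  (forall a b : 'I_l, (a < b)%N -> (idx a < idx b)%N) /\ ~~ (p%:Z %| \det (rowsub idx A))%Z.
Proof.
by move=> pr; rewrite in_frakI_det det_rowsub_map_int (dvdz_pcharf (pchar_Fp pr)).
Qed.

Definition row_lattice (m l : nat) (M : 'M[int]_(m, l)) (v : 'rV[int]_l) : Prop :=
  exists e : 'rV[int]_m, v = e *m M.

Section RowLattice.
Variables (m l : nat) (M : 'M[int]_(m, l)).

Lemma row_lattice0 : row_lattice M 0.
Proof. by exists 0; rewrite mul0mx. Qed.

Lemma row_latticeD u v : row_lattice M u -> row_lattice M v -> row_lattice M (u + v).
Proof. by move=> [e ->] [e' ->]; exists (e + e'); rewrite mulmxDl. Qed.

Lemma row_latticeZ (a : int) u : row_lattice M u -> row_lattice M (a *: u).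
Proof. by move=> [e ->]; exists (a *: e); rewrite scalemxAl. Qed.

End RowLattice.

Lemma det_dvd_kernel_mod (p l : nat) (M : 'M[int]_l) :
  prime p -> (p%:Z %| \det M)%Z ->
  exists2 c : 'rV[int]_l,
    forall j, (p%:Z %| (c *m M) ord0 j)%Z & exists j, ~~ (p%:Z %| c ord0 j)%Z.
Proof.
move=> pr; rewrite (dvdz_pcharf (pchar_Fp pr)) -det_map_mx.
case/det0P=> u u_neq0 uM.
pose c := map_mx (fun x : 'F_p => (x : nat)%:Z) u.
have cu : map_mx (intr : int -> 'F_p) c = u.
  by apply/matrixP => a b; rewrite !mxE /= -pmulrn natr_Zp.
exists c => [j|].
  rewrite (dvdz_pcharf (pchar_Fp pr)).
  by have /matrixP/(_ 0 j) := uM; rewrite -cu -map_mxM !mxE => ->.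
apply/existsP; apply: contraNT u_neq0 => /existsPn c_dvd.
apply/eqP/rowP => j; rewrite -cu !mxE; apply/eqP.
by have := c_dvd j; rewrite negbK mxE (dvdz_pcharf (pchar_Fp pr)).
Qed.

Lemma row_lattice_saturated_det (p l : nat) (M : 'M[int]_l) :
  prime p -> \det M != 0 ->
  (forall v, row_lattice M (p%:Z *: v) -> row_lattice M v) ->
  ~~ (p%:Z %| \det M)%Z.
Proof.
move=> pr detM_neq0 sat; apply/negP => /(det_dvd_kernel_mod pr) [c cM [j c_j]].
pose h := \row_i ((c *m M) ord0 i %/ p%:Z)%Z.
have ph : p%:Z *: h = c *m M.
  by apply/rowP => i; have := cM i; rewrite !mxE mulrC => /divzK.
have [e he] : row_lattice M h by apply: sat; exists c.
have ker0 : (c - p%:Z *: e) *m M = 0 by rewrite mulmxBl -scalemxAl -he ph subrr.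
have : \det M *: (c - p%:Z *: e) == 0.
  by rewrite -mul_mx_scalar -mul_mx_adj mulmxA ker0 mul0mx.
rewrite scalemx_eq0 (negbTE detM_neq0) subr_eq0 => /eqP c_def.
by move: c_j; rewrite c_def mxE dvdz_mulr.
Qed.

Section FoldrMax.
Variables (T : eqType) (s : rel T).
Hypotheses (s_tr : transitive s) (s_total : total s).

Lemma foldr_max_spec (a : T) (r : seq T) :
  let x := foldr (fun m acc => if s m acc then acc else m) a r in
  x \in a :: r /\ forall m, m \in r -> s m x.
Proof.
elim: r => [|y r [IHmem IHub]] /=; first by rewrite mem_seq1.
set x := foldr _ a r in IHmem IHub *.
have s_refl : reflexive s by move=> z; have := s_total z z; rewrite orbb.
case: ifP => [yx | /negbT yx].
  split; first by move: IHmem; rewrite !inE => /orP [->|->]; rewrite ?orbT.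
  by move=> m; rewrite inE => /orP [/eqP -> //| /IHub].
have xy : s x y by have := s_total y x; rewrite (negbTE yx).
split; first by rewrite !inE eqxx orbT.
by move=> m; rewrite inE => /orP [/eqP -> //| /IHub mx]; apply: s_tr mx xy.
Qed.

End FoldrMax.

Definition lead_index (l : nat) (s : rel 'I_l) (u : 'rV[int]_l) (j : 'I_l) : Prop :=
  u 0 j != 0 /\ forall i, u 0 i != 0 -> s i j.

Lemma exists_lead_index (l : nat) (s : rel 'I_l) (u : 'rV[int]_l) :
  transitive s -> total s -> u != 0 -> exists j, lead_index s u j.
Proof.
move=> s_tr s_total u_neq0.
have [i0 ui0] : exists i0, u 0 i0 != 0.
  apply/existsP; apply: contraNT u_neq0 => /existsPn u0.
  by apply/eqP/rowP => i; rewrite mxE; apply/eqP/negPn/u0.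
have [] := foldr_max_spec s_tr s_total i0 [seq i <- enum 'I_l | u 0 i != 0].
set x := foldr _ _ _ => x_in x_ub; exists x; split.
  by move: x_in; rewrite inE mem_filter => /predU1P [->|/andP []].
by move=> i ui; apply: x_ub; rewrite mem_filter ui mem_enum.
Qed.

Section Saturation.
Variables (l p : nat) (s : rel 'I_l) (L : 'rV[int]_l -> Prop).
Hypotheses (p_prime : prime p) (s_tr : transitive s) (s_total : total s).
Hypothesis s_anti : antisymmetric s.
Hypotheses (L0 : L 0) (LD : forall u v, L u -> L v -> L (u + v)).
Hypothesis LZ : forall (a : int) u, L u -> L (a *: u).
Hypothesis L_reduce : forall u j, L u -> lead_index s u j ->
  exists2 w, L w &
    [/\ lead_index s w j, ~~ (p%:Z %| w ord0 j)%Z & (w ord0 j %| u ord0 j)%Z].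

(* The induction measure: it shrinks strictly at each elimination step. *)
Let down_support (u : 'rV[int]_l) : {set 'I_l} :=
  [set i | [exists k, (u 0 k != 0) && s i k]].

Lemma saturation_step v j :
  L (p%:Z *: v) -> lead_index s (p%:Z *: v) j ->
  exists2 w, L w &
    L (p%:Z *: (v - w)) /\ down_support (p%:Z *: (v - w)) \proper down_support (p%:Z *: v).
Proof.
move=> Lpv [pv_j pv_lead].
have [w Lw [[w_j w_lead] p_ndvd w_dvd]] := L_reduce Lpv (conj pv_j pv_lead).
have [a pv_jE] := dvdzP w_dvd; rewrite mxE in pv_jE.
have /dvdzP [b a_def] : (p%:Z %| a)%Z.
  have cop : coprimez p%:Z (w 0 j) by rewrite coprimezE /= prime_coprime // -dvdzE.
  by rewrite -(Gauss_dvdzl _ cop) -pv_jE dvdz_mulr.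
have new_def : p%:Z *: (v - b *: w) = p%:Z *: v + (- a) *: w.
  by rewrite scalerBr scalerA mulrC -a_def scaleNr.
have new_below i : (p%:Z *: (v - b *: w)) 0 i != 0 -> s i j && (i != j).
  rewrite new_def !mxE; have [->|i_neq_j] := eqVneq i j.
    by rewrite pv_jE mulNr subrr eqxx.
  case: (eqVneq (w 0 i) 0) => [->|/w_lead -> //]; rewrite mulr0 addr0 => pv_i.
  by rewrite andbT; apply: pv_lead; rewrite mxE.
exists (b *: w); first exact: LZ.
split; first by rewrite new_def; apply: LD Lpv (LZ _ Lw).
have s_refl : s j j by have := s_total j j; rewrite orbb.
apply/properP; split.
  apply/subsetP => i; rewrite !inE => /existsP [k /andP [nz ik]].
  have /andP [kj _] := new_below k nz.
  by apply/existsP; exists j; rewrite pv_j (s_tr ik kj).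
exists j; first by rewrite inE; apply/existsP; exists j; rewrite pv_j s_refl.
rewrite inE; apply/existsPn => k; apply/negP => /andP [nz jk].
have /andP [kj k_neq_j] := new_below k nz.
by move: k_neq_j; rewrite (s_anti (_ : s k j && s j k)) ?kj ?jk ?eqxx.
Qed.

Lemma lattice_saturated v : L (p%:Z *: v) -> L v.
Proof.
have p_neq0 : p%:Z != 0 by rewrite eqz_nat -lt0n prime_gt0.
suff sat_bound N : forall u, (#|down_support (p%:Z *: u)| < N)%N -> L (p%:Z *: u) -> L u.
  exact: sat_bound (ltnSn _).
elim: N {v} => // N IH v v_lt Lpv.
have [pv0|pv_neq0] := eqVneq (p%:Z *: v) 0.
  by move/eqP: pv0; rewrite scalemx_eq0 (negbTE p_neq0) => /eqP ->.
have [j j_lead] := exists_lead_index s_tr s_total pv_neq0.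
have [w Lw [Lpvw lt]] := saturation_step Lpv j_lead.
rewrite -(subrK w v); apply: LD Lw; apply: IH Lpvw.
by apply: leq_trans (proper_card lt) _; rewrite -ltnS.
Qed.

End Saturation.

Section LeadingTerm.
Variables (l : nat) (sigma : rel 'X_{1..l}).
Hypotheses (sigma_tr : transitive sigma) (sigma_total : total sigma).
Hypothesis sigma_anti : antisymmetric sigma.

Lemma LTs_ub (f : {mpoly int[l]}) m : m \in msupp f -> sigma m (LTs sigma f).
Proof.
have [_ ub] := foldr_max_spec sigma_tr sigma_total (head 0%MM (msupp f)) (msupp f).
exact: ub.
Qed.

Lemma LTs_msupp (f : {mpoly int[l]}) : f != 0 -> LTs sigma f \in msupp f.
Proof.
rewrite -msupp_eq0 /LTs; case: (msupp f) => [|m r] //= _.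
by have [] := foldr_max_spec sigma_tr sigma_total m (m :: r); rewrite /= inE orbA orbb.
Qed.

Lemma LCs_neq0 (f : {mpoly int[l]}) : f != 0 -> LCs sigma f != 0.
Proof. by move/LTs_msupp; rewrite mcoeff_msupp. Qed.

Lemma LTs_eq (f : {mpoly int[l]}) t :
  t \in msupp f -> (forall m, m \in msupp f -> sigma m t) -> LTs sigma f = t.
Proof.
move=> ft t_ub; have f_neq0 : f != 0 by apply: contraTneq ft => ->; rewrite msupp0.
by apply: sigma_anti; rewrite t_ub ?LTs_msupp ?LTs_ub.
Qed.

End LeadingTerm.

Definition linpoly (l : nat) (u : 'rV[int]_l) : {mpoly int[l]} :=
  \sum_(j < l) u 0 j *: 'X_j.

Definition linpart (l : nat) (f : {mpoly int[l]}) : 'rV[int]_l := \row_i f@_U_(i).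

Lemma linpartE (l : nat) (f : {mpoly int[l]}) i : linpart f 0 i = f@_U_(i).
Proof. by rewrite mxE. Qed.

Section LinearForms.
Variable l : nat.
Implicit Types (u : 'rV[int]_l) (e : {mpoly int[l]}).

Lemma linformE (n : nat) (A : 'M[int]_(n, l)) i : linform A i = linpoly (row i A).
Proof. by apply: eq_bigr => j _; rewrite mxE. Qed.

Lemma mcoeff_linpolyU u i : (linpoly u)@_U_(i) = u 0 i.
Proof.
rewrite raddf_sum (bigD1 i) //= big1 => [|j j_neq_i]; rewrite mcoeffZ mcoeffXU.
  by rewrite eqxx mulr1 addr0.
by rewrite (negbTE j_neq_i) mulr0.
Qed.

Lemma msupp_linpoly u m :
  m \in msupp (linpoly u) -> exists2 i, m = U_(i)%MM & u 0 i != 0.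
Proof.
rewrite mcoeff_msupp => m_in.
have [i /andP [/eqP m_def u_i]|no_i] := pickP (fun i => (m == U_(i)%MM) && (u 0 i != 0)).
  by exists i.
move: m_in; rewrite raddf_sum big1 ?eqxx // => i _.
rewrite /= mcoeffZ mcoeffX; move: (no_i i); rewrite /= eq_sym.
by case: eqP => [_ /negbFE/eqP -> | _ _]; rewrite ?mul0r ?mulr0.
Qed.

Lemma linpoly_neq0 u i : u 0 i != 0 -> linpoly u != 0.
Proof. by apply: contraNneq => u0; rewrite -mcoeff_linpolyU u0 mcoeff0. Qed.

Lemma linpoly_mul (m : nat) (M : 'M[int]_(m, l)) (e : 'rV[int]_m) :
  linpoly (e *m M) = \sum_(k < m) (e 0 k)%:MP * linpoly (row k M).
Proof.
apply/mpolyP => t; rewrite !raddf_sum /=.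
under [RHS]eq_bigr => k _ do rewrite mcoeffCM raddf_sum mulr_sumr.
rewrite exchange_big /=; apply: eq_bigr => j _.
rewrite mcoeffZ !mxE mulr_suml; apply: eq_bigr => k _.
by rewrite mcoeffZ !mxE mulrA.
Qed.

Lemma mcoeffMXE e j m :
  (e * 'X_j)@_m = if (U_(j) <= m)%MM then e@_(m - U_(j))%MM else 0.
Proof.
case: ifP => [le_jm|lt_mj]; first by rewrite -{1}(submK le_jm) addmC mcoeffMX.
apply/eqP; rewrite mcoeff_eq0 (perm_mem (msuppMX _ _)); apply/negP => /mapP [t _ m_def].
by move: lt_mj; rewrite m_def lem_addr.
Qed.

Lemma mcoeffMX0 e j : (e * 'X_j)@_0%MM = 0.
Proof. by rewrite mcoeffMXE lep1mP mnm0E eqxx. Qed.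

Lemma mcoeffMXU e i j : (e * 'X_j)@_U_(i) = if j == i then e@_0%MM else 0.
Proof.
rewrite mcoeffMXE lep1mP mnm1E eq_sym; case: (eqVneq j i) => [->|] //=.
by rewrite -{1}[U_(i)%MM]add0m addmK.
Qed.

Lemma mcoeff_mul_linpoly0 e u : (e * linpoly u)@_0%MM = 0.
Proof.
rewrite mulr_sumr raddf_sum big1 // => j _ /=.
by rewrite -scalerAr mcoeffZ mcoeffMX0 mulr0.
Qed.

Lemma mcoeff_mul_linpolyU e u i : (e * linpoly u)@_U_(i) = u 0 i * e@_0%MM.
Proof.
rewrite mulr_sumr raddf_sum (bigD1 i) //= big1 => [|j j_neq_i].
  by rewrite -scalerAr mcoeffZ mcoeffMXU eqxx addr0.
by rewrite -scalerAr mcoeffZ mcoeffMXU (negbTE j_neq_i) mulr0.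
Qed.

End LinearForms.

Lemma gen_ideal_mapP (m l : nat) (F : 'I_m -> {mpoly int[l]}) f :
  gen_ideal [seq F k | k <- enum 'I_m] f <->
  exists E : 'I_m -> {mpoly int[l]}, f = \sum_(k < m) E k * F k.
Proof.
have nth_enum (H : 'I_m -> {mpoly int[l]}) (k : 'I_m) : [seq H i | i <- enum 'I_m]`_k = H k.
  by rewrite (nth_map k) ?size_enum_ord // nth_ord_enum.
have size_map_enum (H : 'I_m -> {mpoly int[l]}) : size [seq H i | i <- enum 'I_m] = m.
  by rewrite size_map size_enum_ord.
have sum_enum (c : seq {mpoly int[l]}) :
    \sum_(k < size [seq F i | i <- enum 'I_m]) c`_k * [seq F i | i <- enum 'I_m]`_k =
    \sum_(k < m) c`_k * F k.
  by rewrite size_map_enum; apply: eq_bigr => k _; rewrite nth_enum.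
split=> [[c [_ ->]]|[E ->]]; first by exists (fun k => c`_k); rewrite sum_enum.
exists [seq E k | k <- enum 'I_m]; rewrite sum_enum !size_map_enum; split=> //.
by apply: eq_bigr => k _; rewrite nth_enum.
Qed.

Lemma linpoly_ideal (m l : nat) (M : 'M[int]_(m, l)) u :
  row_lattice M u -> gen_ideal [seq linpoly (row k M) | k <- enum 'I_m] (linpoly u).
Proof.
by move=> [e ->]; apply/gen_ideal_mapP; exists (fun k => (e 0 k)%:MP); apply: linpoly_mul.
Qed.

Lemma ideal_linpart (m l : nat) (M : 'M[int]_(m, l)) f :
  gen_ideal [seq linpoly (row k M) | k <- enum 'I_m] f ->
  f@_0%MM = 0 /\ row_lattice M (linpart f).
Proof.
move/gen_ideal_mapP => [E ->]; split.
  by rewrite raddf_sum big1 // => k _; apply: mcoeff_mul_linpoly0.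
exists (\row_k (E k)@_0%MM); apply/rowP => i; rewrite !mxE raddf_sum.
by apply: eq_bigr => k _; rewrite /= mcoeff_mul_linpolyU !mxE mulrC.
Qed.

Lemma lem_mnm1 (l : nat) (t : 'X_{1..l}) j : (t <= U_(j))%MM -> t = 0%MM \/ t = U_(j)%MM.
Proof.
move/forallP => t_le.
have t_i i : i != j -> t i = 0%N.
  by move=> i_neq_j; have := t_le i; rewrite mnm1E eq_sym (negbTE i_neq_j) leqn0 => /eqP.
have := t_le j; rewrite mnm1E eqxx; case t_j: (t j) => [|[|//]] _; [left | right].
  by apply/mnmP => i; rewrite mnm0E; case: (eqVneq i j) => [->//|/t_i].
by apply/mnmP => i; rewrite mnm1E; case: (eqVneq j i) => [<-//|]; rewrite eq_sym => /t_i.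
Qed.

Definition var_order (l : nat) (sigma : rel 'X_{1..l}) : rel 'I_l :=
  fun i j => sigma U_(i)%MM U_(j)%MM.

Section VarOrder.
Variables (l : nat) (sigma : rel 'X_{1..l}).

Lemma var_order_tr : transitive sigma -> transitive (var_order sigma).
Proof. by move=> sigma_tr i j k; apply: sigma_tr. Qed.

Lemma var_order_total : total sigma -> total (var_order sigma).
Proof. by move=> sigma_total i j; apply: sigma_total. Qed.

Lemma var_order_anti : antisymmetric sigma -> antisymmetric (var_order sigma).
Proof. by move=> sigma_anti i j /sigma_anti/eqP; rewrite eq_mnm1 => /eqP. Qed.

End VarOrder.

Section LuckyReduction.
Variables (m l p : nat) (M : 'M[int]_(m, l)) (sigma : rel 'X_{1..l}).
Hypotheses (sigma_tr : transitive sigma) (sigma_total : total sigma).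
Hypothesis sigma_anti : antisymmetric sigma.
Variable G : seq {mpoly int[l]}.
Hypothesis G_basis :
  min_strong_GB sigma (gen_ideal [seq linpoly (row k M) | k <- enum 'I_m]) G.
Hypothesis p_lucky : forall g, g \in G -> ~~ (p%:Z %| LCs sigma g)%Z.

Lemma LTs_linpoly u j : lead_index (var_order sigma) u j -> LTs sigma (linpoly u) = U_(j)%MM.
Proof.
move=> [u_j u_lead]; apply: LTs_eq => //; first by rewrite mcoeff_msupp mcoeff_linpolyU.
by move=> t /msupp_linpoly [i -> /u_lead].
Qed.

Lemma lucky_reduction u j : row_lattice M u -> lead_index (var_order sigma) u j ->
  exists2 w, row_lattice M w &
    [/\ lead_index (var_order sigma) w j, ~~ (p%:Z %| w ord0 j)%Z & (w ord0 j %| u ord0 j)%Z].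
Proof.
move=> Lu u_lead; have [G_ideal _ G_dvd _] := G_basis.
have [g gG] := G_dvd _ (linpoly_ideal Lu) (linpoly_neq0 u_lead.1).
have [g_neq0 /ideal_linpart [g0 Lg]] := G_ideal g gG.
(* g has no constant term, so its leading term, which divides x_j, is x_j. *)
rewrite /LM_dvd (LTs_linpoly u_lead) => /andP [LC_dvd /lem_mnm1 [LTg0|LTg]].
  by have := LCs_neq0 sigma_tr sigma_total g_neq0; rewrite /LCs LTg0 g0 eqxx.
exists (linpart g) => //; split.
- split=> [|i]; first by rewrite linpartE -LTg (LCs_neq0 sigma_tr sigma_total).
  by rewrite linpartE -mcoeff_msupp /var_order -LTg => /(LTs_ub sigma_tr sigma_total).
- by rewrite linpartE -LTg p_lucky.
- by move: LC_dvd; rewrite /LCs LTg (LTs_linpoly u_lead) mcoeff_linpolyU linpartE.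
Qed.

End LuckyReduction.

Theorem proposition4p11 (n l : nat) (A : 'M[int]_(n, l))
    (idx : 'I_l -> 'I_n) (sigma : rel 'X_{1..l}) (p : nat) :
  central_essential_arrangement A ->
  (forall a b : 'I_l, (a < b)%N -> (idx a < idx b)%N) ->
  term_order sigma ->
  good_prime A p ->
  sigma_lucky sigma (gen_ideal [seq linform A (idx k) | k <- enum 'I_l]) p ->
  (in_frakI (matQ A) idx <-> in_frakI (matp p A) idx).
Proof.
move=> _ _ [[_ sigma_tr sigma_anti sigma_total] _] [p_prime _] [G [G_basis G_lucky]].
set M := rowsub idx A.
have linforms : [seq linform A (idx k) | k <- enum 'I_l] =
                [seq linpoly (row k M) | k <- enum 'I_l].
  by apply: eq_map => k; rewrite linformE row_rowsub.
rewrite linforms in G_basis.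
suff detM_ndvd : \det M != 0 -> ~~ (p%:Z %| \det M)%Z.
  split=> [/in_frakI_matQ [mono detM] | /(in_frakI_matp _ _ p_prime) [mono ndvd]].
    by apply/(in_frakI_matp _ _ p_prime); split=> //; apply: detM_ndvd.
  by apply/in_frakI_matQ; split=> //; apply: contraNneq ndvd => ->; apply: dvdz0.
move=> detM_neq0; apply: row_lattice_saturated_det => //.
apply: (lattice_saturated (s := var_order sigma)) => //.
- exact: var_order_tr.
- exact: var_order_total.
- exact: var_order_anti.
- exact: row_lattice0.
- exact: row_latticeD.
- exact: row_latticeZ.
- by move=> u j; apply: (lucky_reduction sigma_tr sigma_total sigma_anti G_basis).
Qed.
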